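(* There is a constant $C$ such that every path restricted ordered bipartite graph $G=(U,V,E)$ with $n=|U|+|V|\ge 2$ vertices satisfies $|E|\le n\log_2 n + Cn$. Moreover, this bound is tight up to the constant factor: there is a constant $c>0$ such that for every $n\ge 2$ there exists a path restricted ordered bipartite graph on $n$ vertices with at least $c\,n\log n$ edges.
   Context: An ordered bipartite graph is a triple $G=(U,V,E)$ where $U$ and $V$ are disjoint finite sets, each equipped with a total order (both denoted $<$), and $E\subseteq U\times V$ is a set of edges. A forward path in $G$ is a sequence $w_0,w_1,\dots,w_m$ ($m\ge1$) of distinct vertices alternating between $U$ and $V$, with $\{w_{k-1},w_k\}\in E$ for all $k$, such that the vertices of the sequence lying in $U$ appear in strictly increasing order along the sequence and the vertices lying in $V$ also appear in strictly increasing order along the sequence (a path whose $U$-vertices and $V$-vertices are both strictly decreasing is the same path read in reverse). The range of the forward path is the pair of intervals $\langle u_a,u_b\rangle=\{u\in U: u_a\le u\le u_b\}$ and $\langle v_c,v_d\rangle=\{v\in V: v_c\le v\le v_d\}$, where $u_a,u_b$ (resp. $v_c,v_d$) are the smallest and largest $U$-vertices (resp. $V$-vertices) on the path. A back edge to such a forward path is an edge $\{w_0,x\}\in E$ where $x$ lies in the part ($U$ or $V$) not containing $w_0$ and $w_1 < x \le M$, with $M$ the largest vertex of the path in that part (so $x$ lies in the range of the path). $G$ has the path restricted property, and is called a path restricted ordered bipartite graph (PRBG), if no forward path in $G$ has a back edge in $E$. *)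

From mathcomp Require Import all_boot.
From Stdlib Require Import Reals.
Set Implicit Arguments. Unset Strict Implicit. Unset Printing Implicit Defensive.

(* An ordered bipartite graph with |U| = p, |V| = q: U = 'I_p, V = 'I_q with
   their natural orders (every finite totally ordered set is order-isomorphic
   to an ordinal). *)

Definition vert (p q : nat) := ('I_p + 'I_q)%type.

Definition adj (p q : nat) (E : {set 'I_p * 'I_q}) (a b : vert p q) : bool :=
  match a, b with
  | inl u, inr v => (u, v) \in E
  | inr v, inl u => (u, v) \in E
  | _, _ => false
  end.

Definition inU (p q : nat) (a : vert p q) : bool :=
  if a is inl _ then true else false.

Definition same_part (p q : nat) (a b : vert p q) : bool := inU a == inU b.

Definition vlt (p q : nat) (a b : vert p q) : bool :=
  match a, b with
  | inl u, inl u' => (val u < val u')%N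
  | inr v, inr v' => (val v < val v')%N
  | _, _ => false
  end.

Definition vle (p q : nat) (a b : vert p q) : bool :=
  match a, b with
  | inl u, inl u' => (val u <= val u')%N
  | inr v, inr v' => (val v <= val v')%N
  | _, _ => false
  end.

Definition getU (p q : nat) (a : vert p q) : option nat :=
  if a is inl u then Some (val u) else None.
Definition getV (p q : nat) (a : vert p q) : option nat :=
  if a is inr v then Some (val v) else None.

Definition forward_path (p q : nat) (E : {set 'I_p * 'I_q}) (s : seq (vert p q)) : Prop :=
  match s with
  | w0 :: w1 :: t =>
      [/\ uniq s, path (adj E) w0 (w1 :: t),
          sorted ltn (pmap (@getU p q) s) & sorted ltn (pmap (@getV p q) s)]
  | _ => False
  end.

(* A back edge to the forward path s = w_0 :: w_1 :: _ : an edge {w_0, x}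
   with x in the part of w_1 (the part not containing w_0) and
   w_1 < x <= M, M the largest vertex of the path in that part
   (x <= M is written as: x <= y for some vertex y of the path in that part). *)
Definition back_edge (p q : nat) (E : {set 'I_p * 'I_q}) (s : seq (vert p q))
  (x : vert p q) : Prop :=
  match s with
  | w0 :: w1 :: _ =>
      [/\ same_part x w1, adj E w0 x, vlt w1 x &
          exists2 y, y \in s & same_part y w1 /\ vle x y]
  | _ => False
  end.

Definition PRBG (p q : nat) (E : {set 'I_p * 'I_q}) : Prop :=
  forall (s : seq (vert p q)) (x : vert p q), forward_path E s -> ~ back_edge E s x.

Definition log2 (x : R) : R := (ln x / ln 2)%R.

(* Upper bound: for an edge {x, y} let R(x, y) be the set of last edges of the forward paths
   starting with x, y.  The path restriction makes the sets R(y, z), z a neighbour of y,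
   pairwise disjoint, so their sizes add up to at most n^2; prepending z to a path shows that
   R(z, y) strictly contains the union of the R(y, w) over the neighbours w > z of y.  Hence
   4^deg(y) prod_z |R(y, z)| <= 4 (n^2 + 1)^2 prod_z |R(z, y)| at every vertex y; multiplying
   over all y, each factor |R(y, z)| occurs on both sides, and what remains is
   16^|E| <= (16 n^4)^n, i.e. |E| <= n log2 (2n).

   Lower bound: the graph on U = V = [0, 2^k) made of a perfect matching between the first
   halves and of two copies of the graph of level k - 1 between opposite halves has
   2^(k-1) (k + 2) edges.  It is path restricted because each edge (u, v) carries a height
   h(u, v) > v that does not increase along forward paths and that bounds every other
   neighbour x > v of u from below, so a back edge would have to lie both below and above
   the height of the first edge of the path. *)

From mathcomp Require Import all_boot boolp.
From Stdlib Require Import Reals Lra.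
From mathcomp Require Import ssrnat zify.
Set Implicit Arguments. Unset Strict Implicit. Unset Printing Implicit Defensive.

Lemma card_bigcup_disjoint (I T : finType) (P : pred I) (F : I -> {set T}) :
  {in P &, forall i j, i != j -> [disjoint F i & F j]} ->
  #|\bigcup_(i | P i) F i| = \sum_(i | P i) #|F i|.
Proof.
move=> disjF; pose G i := if P i then F i else set0.
have disjG i j : i != j -> [disjoint G i & G j].
  move=> ne; rewrite /G; case: ifP => Pi; last by rewrite -setI_eq0 set0I.
  case: ifP => Pj; last by rewrite -setI_eq0 setI0.
  exact: disjF.
rewrite big_mkcond -/G -sum1_card (partition_disjoint_bigcup _ _ disjG) [RHS]big_mkcond.
by apply: eq_bigr => i _; rewrite /G sum1_card; case: (P i); rewrite ?cards0.
Qed.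

Lemma tail_product_step (t T a P Y : nat) :
  P <= 4 * T.+1 ^ 2 * Y -> T < a -> 4 * t * P <= 4 * (t + T).+1 ^ 2 * (a * Y).
Proof.
move=> le_P lt_a; apply: leq_trans (leq_mul (leqnn _) le_P) _.
have agm := (nat_AGM2 t T.+1).1; rewrite addnS in agm.
have -> : 4 * t * (4 * T.+1 ^ 2 * Y) = 4 * (4 * (t * T.+1)) * (T.+1 * Y) by nia.
rewrite -mulnA -[4 * _ ^ 2 * _]mulnA leq_mul2l /=.
exact: leq_mul agm (leq_mul lt_a (leqnn Y)).
Qed.

Lemma prod_le_tail_sums (I : finType) (r t a : I -> nat) (S : {set I}) :
  {in S &, injective r} ->
  {in S, forall i, \sum_(j in S | r i < r j) t j < a i} ->
  4 ^ #|S| * \prod_(i in S) t i <= 4 * (\sum_(i in S) t i).+1 ^ 2 * \prod_(i in S) a i.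
Proof.
have [n] := ubnP #|S|; elim: n S => // n IH S ltSn r_inj tail_lt.
have [->|[x Sx]] := set_0Vmem S; first by rewrite cards0 !big_set0.
have [i0 + min_i0] := arg_minnP r Sx; rewrite -[_ i0]/(i0 \in S) => Si0.
set S' := S :\ i0.
have tail_eq i : i \in S -> r i0 <= r i ->
    \sum_(j in S | r i < r j) t j = \sum_(j in S' | r i < r j) t j.
  move=> Si le_i; apply: eq_bigl => j; rewrite !inE.
  by case: eqP => [->|_] /=; rewrite ?ltnNge ?le_i ?andbF.
have tail_i0 : \sum_(j in S | r i0 < r j) t j = \sum_(j in S') t j.
  rewrite tail_eq //; apply: eq_bigl => j; rewrite !inE.
  case: eqP => [//|ne_j]; case Sj: (j \in S) => //=.
  rewrite ltn_neqAle min_i0 // andbT; apply/eqP => /(r_inj _ _ Si0 Sj) eq_j.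
  exact: ne_j.
have IHS' : 4 ^ #|S'| * \prod_(i in S') t i
            <= 4 * (\sum_(i in S') t i).+1 ^ 2 * \prod_(i in S') a i.
  apply: IH.
  - by move: ltSn; rewrite (cardsD1 i0 S) Si0.
  - by move=> i j /setD1P[_ Si] /setD1P[_ Sj]; exact: r_inj.
  - by move=> i /setD1P[_ Si]; rewrite -tail_eq ?min_i0 ?tail_lt.
have ta_i0 := tail_lt i0 Si0; rewrite tail_i0 in ta_i0.
rewrite (cardsD1 i0 S) Si0 add1n !(big_setD1 i0 Si0) /= -/S' expnS.
have -> : 4 * 4 ^ #|S'| * (t i0 * \prod_(i in S') t i)
         = 4 * t i0 * (4 ^ #|S'| * \prod_(i in S') t i) by nia.
exact: tail_product_step IHS' ta_i0.
Qed.

Definition vval (p q : nat) (a : vert p q) : nat :=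
  match a with inl u => val u | inr v => val v end.

Section OrderedBipartiteGraph.
Variables (p q : nat) (E : {set 'I_p * 'I_q}).
Implicit Types (a b c x y z w : vert p q) (s : seq (vert p q)).

Lemma adjC a b : adj E a b = adj E b a.
Proof. by case: a; case: b. Qed.

Lemma adj_same_part a b : adj E a b -> same_part a b = false.
Proof. by case: a; case: b. Qed.

Lemma same_partC a b : same_part a b = same_part b a.
Proof. by rewrite /same_part eq_sym. Qed.

Lemma same_part_trans b a c : same_part a b -> same_part b c -> same_part a c.
Proof. by rewrite /same_part => /eqP -> /eqP ->. Qed.

Lemma adj_same_part_or a b c : adj E a b -> same_part a c || same_part b c.
Proof. by case: a b c => a [] b [] c. Qed.

Lemma vlt_same_part a b : vlt a b -> same_part a b.
Proof. by case: a; case: b. Qed.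

Lemma vlt_vval a b : vlt a b -> vval a < vval b.
Proof. by case: a; case: b. Qed.

Lemma vle_vval a b : vle a b -> vval a <= vval b.
Proof. by case: a; case: b. Qed.

Lemma vle_vvalE a b : same_part a b -> vle a b = (vval a <= vval b).
Proof. by case: a b => a [] b. Qed.

Lemma adj_vltE y z w : adj E y z -> adj E y w -> vlt z w = (vval z < vval w).
Proof. by case: y z w => y [] z [] w. Qed.

Lemma adj_vval_inj y z w : adj E y z -> adj E y w -> vval z = vval w -> z = w.
Proof. by case: y z w => y [] z [] w //= _ _ /val_inj ->. Qed.

Lemma forward_path_adj x y s : forward_path E (x :: y :: s) -> adj E x y.
Proof. by case=> _ /= /andP[]. Qed.

Lemma forward_path_behead x y z s :
  forward_path E (x :: y :: z :: s) -> forward_path E (y :: z :: s).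
Proof.
case=> /= /andP[_ uniq_s] /andP[_ path_s] sortedU sortedV; split => //.
- by case: x sortedU sortedV => x /= sU sV //; exact: path_sorted sU.
- by case: x sortedU sortedV => x /= sU sV //; exact: path_sorted sV.
Qed.

Lemma forward_path_vlt x y z s : forward_path E (x :: y :: z :: s) -> vlt x z.
Proof.
case=> _ /= /andP[xy /andP[yz _]] sortedU sortedV.
by case: x y z xy yz sortedU sortedV => x [] y [] z //= _ _; [case/andP | move=> _ /andP[]].
Qed.

Lemma forward_path_gt x y s c :
  forward_path E (x :: y :: s) -> c \in s -> same_part c y -> vlt y c.
Proof.
case=> _ /= /andP[xy _] sortedU sortedV s_c.
have lt_head k l : sorted ltn (k :: l) -> forall j, j \in l -> k < j.
  by move=> /= /(order_path_min ltn_trans) /allP.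
case: x y c xy sortedU sortedV s_c => x [] y [] c //= _ sortedU sortedV s_c _.
- by apply: lt_head sortedV _ _; rewrite mem_pmap; apply/mapP; exists (inr c).
- by apply: lt_head sortedU _ _; rewrite mem_pmap; apply/mapP; exists (inl c).
Qed.

Lemma forward_path_part_ge x y s c :
  forward_path E (x :: y :: s) -> c \in x :: y :: s -> same_part c y -> vval y <= vval c.
Proof.
move=> fp; rewrite !inE => /orP[/eqP ->|/orP[/eqP -> //|s_c]].
- by rewrite (adj_same_part (forward_path_adj fp)).
- by move=> cy; apply: ltnW; apply: vlt_vval (forward_path_gt fp s_c cy).
Qed.

Lemma forward_path_pair x y : adj E x y -> forward_path E [:: x; y].
Proof. by case: x y => x [] y //= xy; split => //=; rewrite ?xy // inE. Qed.

Lemma forward_path_cons x y z s : adj E x y -> vlt x z ->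
  forward_path E (y :: z :: s) -> forward_path E (x :: y :: z :: s).
Proof.
move=> xy xz fp; have [uniq_s path_s sortedU sortedV] := fp.
have x_notin_s : x \notin s.
  apply/negP => s_x; have := forward_path_gt fp s_x.
  rewrite (vlt_same_part xz) => /(_ isT) /vlt_vval.
  by have := vlt_vval xz; lia.
split.
- rewrite cons_uniq uniq_s andbT !inE !negb_or x_notin_s andbT.
  apply/andP; split; apply/eqP => eq_x.
  + by move: xy; rewrite eq_x; case: (y).
  + by move: xz; rewrite eq_x; case: (z) => ? /=; rewrite ltnn.
- by rewrite /= xy.
- by case: x y z xy xz sortedU {sortedV fp x_notin_s uniq_s path_s} => x [] y [] z //= _ ->.
- by case: x y z xy xz sortedV {sortedU fp x_notin_s uniq_s path_s} => x [] y [] z //= _ ->.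
Qed.

Definition nbrs y : {set vert p q} := [set z | adj E y z].

Lemma sum_card_nbrs : \sum_y #|nbrs y| = 2 * #|E|.
Proof.
have cardE : #|E| = \sum_(u : 'I_p) \sum_(v : 'I_q) ((u, v) \in E : nat).
  rewrite -sum1_card big_mkcond /= pair_bigA /=.
  by apply: eq_bigr => -[u v] _; case: ((u, v) \in E).
have card_nbrs y : #|nbrs y| = \sum_z (adj E y z : nat).
  by rewrite -sum1_card big_mkcond /=; apply: eq_bigr => z _; rewrite inE; case: adj.
rewrite (eq_bigr _ (fun y _ => card_nbrs y)) big_sumType /=.
rewrite (eq_bigr (fun u => \sum_(v : 'I_q) ((u, v) \in E : nat))); last first.
  by move=> u _; rewrite big_sumType /= big1 ?add0n.
rewrite [X in _ + X](eq_bigr (fun v => \sum_(u : 'I_p) ((u, v) \in E : nat))); last first.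
  by move=> v _; rewrite big_sumType /= [X in _ + X]big1 ?addn0.
by rewrite [X in _ + X]exchange_big -cardE mul2n addnn.
Qed.

Lemma prod_nbrsC (f : vert p q -> vert p q -> nat) :
  \prod_y \prod_(z in nbrs y) f z y = \prod_y \prod_(z in nbrs y) f y z.
Proof.
have mkcond g : \prod_y \prod_(z in nbrs y) g y z
                = \prod_y \prod_z (if adj E y z then g y z else 1).
  by apply: eq_bigr => y _; rewrite big_mkcond; apply: eq_bigr => z _; rewrite inE.
rewrite (mkcond (fun y z => f z y)) mkcond exchange_big /=.
by apply: eq_bigr => y _; apply: eq_bigr => z _; rewrite adjC.
Qed.

End OrderedBipartiteGraph.

Section FinalEdges.
Variables (p q : nat) (E : {set 'I_p * 'I_q}).
Implicit Types (a b c x y z w : vert p q) (s : seq (vert p q)).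

Local Notation nbrs := (nbrs E).

Definition last_edge x y s := (last x (belast y s), last y s).

Definition final_edges x y : {set vert p q * vert p q} :=
  [set e | `[< exists s, forward_path E (x :: y :: s) /\ last_edge x y s = e >]].

Lemma final_edgesP x y e :
  reflect (exists s, forward_path E (x :: y :: s) /\ last_edge x y s = e)
          (e \in final_edges x y).
Proof. by rewrite inE; exact: asboolP. Qed.

Lemma last_edge_path x y s : forward_path E (x :: y :: s) ->
  let e := last_edge x y s in [/\ e.1 \in x :: y :: s, e.2 \in x :: y :: s & adj E e.1 e.2].
Proof.
case=> _ path_s _ _; rewrite /last_edge /=.
case/lastP: s path_s => [|s z] /=; first by rewrite !inE !eqxx !orbT => /andP[].
rewrite belast_rcons last_rcons -rcons_cons rcons_path => /and3P[_ _ adj_z].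
by rewrite adj_z -cats1 -cat_cons !mem_cat mem_last !inE eqxx !orbT.
Qed.

Lemma final_edges_refl x y : adj E x y -> (x, y) \in final_edges x y.
Proof. by move=> xy; apply/final_edgesP; exists [::]; split; first exact: forward_path_pair. Qed.

Lemma final_edges_cons x y z : adj E x y -> vlt x z ->
  final_edges y z \subset final_edges x y.
Proof.
move=> xy xz; apply/subsetP => e /final_edgesP[s [fp <-]].
by apply/final_edgesP; exists (z :: s); split; first exact: forward_path_cons.
Qed.

Lemma final_edges_head x y z : (x, y) \notin final_edges y z.
Proof.
apply/final_edgesP => -[s [[uniq_s _ _ _] [_ last_y]]].
by move: uniq_s; rewrite cons_uniq -{1}last_y mem_last.
Qed.

Hypothesis PRBG_E : PRBG E.

Lemma final_edges_disjoint x y1 y2 : adj E x y1 -> adj E x y2 -> vlt y1 y2 ->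
  [disjoint final_edges x y1 & final_edges x y2].
Proof.
move=> xy1 xy2 y12; rewrite -setI_eq0; apply/eqP/setP => e; rewrite in_setI in_set0.
apply/negbTE/andP => -[/final_edgesP[s1 [fp1 <-]] /final_edgesP[s2 [fp2 e_s2]]].
have [s1_e1 s1_e2 adj_e] := last_edge_path fp1.
have [s2_e1 s2_e2 _] := last_edge_path fp2; rewrite e_s2 in s2_e1 s2_e2.
have y1y2 := vlt_same_part y12.
(* A common vertex c in the part of y1 lies at or beyond y2 on the second path, so on the
   first path {x, y2} is a back edge. *)
have [c [s1_c s2_c cy1]] :
    exists c, [/\ c \in x :: y1 :: s1, c \in x :: y2 :: s2 & same_part c y1].
  case/orP: (adj_same_part_or y1 adj_e) => ?.
  - by exists (last_edge x y1 s1).1.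
  - by exists (last_edge x y1 s1).2.
have le_y2c := forward_path_part_ge fp2 s2_c (same_part_trans cy1 y1y2).
move: s1_c; rewrite !inE => /orP[/eqP c_x|/orP[/eqP c_y1|s1_c]].
- by move: cy1; rewrite c_x (adj_same_part xy1).
- by move: le_y2c; rewrite c_y1; have := vlt_vval y12; lia.
- suff : back_edge E (x :: y1 :: s1) y2 by exact: PRBG_E fp1.
  split => //; first by rewrite same_partC.
  exists c; first by rewrite !inE s1_c !orbT.
  by split => //; rewrite vle_vvalE // same_partC (same_part_trans cy1 y1y2).
Qed.

Lemma final_edges_nbrs_disjoint y :
  {in nbrs y &, forall z w, z != w -> [disjoint final_edges y z & final_edges y w]}.
Proof.
move=> z w; rewrite !inE => yz yw ne_zw.
have ne : vval z != vval w by apply: contra_neq ne_zw; exact: adj_vval_inj yz yw.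
case: (ltngtP (vval z) (vval w)) ne => // lt_zw _.
- by apply: final_edges_disjoint; rewrite ?(adj_vltE yz yw).
- by rewrite disjoint_sym; apply: final_edges_disjoint; rewrite ?(adj_vltE yw yz).
Qed.

Lemma sum_card_final_edges_le y :
  \sum_(z in nbrs y) #|final_edges y z| <= (p + q) ^ 2.
Proof.
rewrite -card_bigcup_disjoint; last exact: final_edges_nbrs_disjoint.
by apply: (leq_trans (max_card _)); rewrite card_prod !card_sum !card_ord mulnn.
Qed.

Lemma sum_card_final_edges_lt y z : z \in nbrs y ->
  \sum_(w in nbrs y | vval z < vval w) #|final_edges y w| < #|final_edges z y|.
Proof.
rewrite inE => yz; rewrite -card_bigcup_disjoint; last first.
  move=> w w' /andP[yw _] /andP[yw' _]; exact: final_edges_nbrs_disjoint.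
apply: proper_card; apply/properP; split.
- apply/subsetP => e /bigcupP[w /andP[]]; rewrite inE => yw lt_zw.
  apply/subsetP/final_edges_cons; first by rewrite adjC.
  by rewrite (adj_vltE yz yw).
- exists (z, y); first by apply: final_edges_refl; rewrite adjC.
  by apply/bigcupP => -[w _]; apply/negP; exact: final_edges_head.
Qed.

Lemma prod_card_final_edges_le y :
  4 ^ #|nbrs y| * \prod_(z in nbrs y) #|final_edges y z|
  <= 4 * ((p + q) ^ 2).+1 ^ 2 * \prod_(z in nbrs y) #|final_edges z y|.
Proof.
apply: leq_trans (prod_le_tail_sums (r := @vval p q) _ _) _.
- by move=> z w; rewrite !inE; exact: adj_vval_inj.
- by move=> z; exact: sum_card_final_edges_lt.
- by rewrite leq_mul2r leq_mul2l /= leq_sqr ltnS sum_card_final_edges_le orbT.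
Qed.

Lemma PRBG_card_le : 2 ^ #|E| <= (2 * (p + q)) ^ (p + q).
Proof.
have card_vert : #|{: vert p q}| = p + q by rewrite card_sum !card_ord.
have prod_gt0 : 0 < \prod_y \prod_(z in nbrs y) #|final_edges y z|.
  rewrite prodn_gt0 // => y; rewrite prodn_cond_gt0 // => z; rewrite inE => yz.
  by rewrite card_gt0; apply/set0Pn; exists (y, z); exact: final_edges_refl.
have : 4 ^ (2 * #|E|) <= (4 * ((p + q) ^ 2).+1 ^ 2) ^ (p + q).
  have := leq_prod (r := index_enum (vert p q)) (P := xpredT)
                   (fun y _ => prod_card_final_edges_le y).
  rewrite big_split [leqRHS]big_split /= prod_nat_const card_vert.
  rewrite (prod_nbrsC E (fun y z => #|final_edges y z|)).
  by rewrite -(big_morph _ (expnD 4) (expn0 4)) sum_card_nbrs leq_pmul2r.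
move=> /leq_trans le4; rewrite -(leq_exp2r _ _ (isT : 0 < 4)).
have -> : (2 ^ #|E|) ^ 4 = 4 ^ (2 * #|E|).
  by rewrite -expnM [in RHS](_ : 4 = 2 ^ 2) // -expnM; congr (2 ^ _); lia.
have -> : ((2 * (p + q)) ^ (p + q)) ^ 4 = (16 * (p + q) ^ 4) ^ (p + q).
  by rewrite -expnM (mulnC (p + q)) expnM expnMn.
apply: le4.
by case: (p + q) => // n; rewrite leq_exp2r //; nia.
Qed.

End FinalEdges.

(* [h x y] bounds the vertices of the part of [y] on the forward paths starting with
   [x, y] (forward_path_lt_height), while the other neighbours of [x] beyond [y] lie at or
   above it: these are incompatible with a back edge. *)
Section HeightCriterion.
Variables (p q : nat) (E : {set 'I_p * 'I_q}) (h : vert p q -> vert p q -> nat).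
Hypothesis height_gt : forall a b, adj E a b -> vval b < h a b.
Hypothesis height_antimono : forall a b c d, adj E a b -> adj E c b -> adj E c d ->
  vlt a c -> vlt b d -> h c d <= h a b.
Hypothesis height_le_nbr : forall a b x, adj E a b -> adj E a x -> vlt b x -> h a b <= vval x.

Lemma forward_path_lt_height x y s c :
  forward_path E (x :: y :: s) -> c \in s -> same_part c y -> vval c < h x y.
Proof.
have [n] := ubnP (size s); elim: n x y s => // n IH x y s size_s fp.
case: s size_s fp => [//|z s] size_s fp.
have yz := forward_path_adj (forward_path_behead fp).
have zy : same_part z y = false by rewrite same_partC (adj_same_part yz).
case: s size_s fp => [|w s] size_s fp; first by rewrite inE => /eqP ->; rewrite zy.
have fp' := forward_path_behead (forward_path_behead fp).
have le_h : h z w <= h x y.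
  apply: height_antimono (forward_path_vlt fp) (forward_path_vlt (forward_path_behead fp)).
  - exact: forward_path_adj fp.
  - by rewrite adjC.
  - exact: forward_path_adj fp'.
rewrite !inE => /orP[/eqP ->|/orP[/eqP ->|s_c cy]]; first by rewrite zy.
- by move=> _; apply: leq_trans le_h; exact: height_gt (forward_path_adj fp').
- apply: leq_trans le_h; apply: IH fp' s_c _; first by move: size_s => /=; lia.
  exact: same_part_trans cy (vlt_same_part (forward_path_vlt (forward_path_behead fp))).
Qed.

Lemma PRBG_of_height : PRBG E.
Proof.
move=> [|x [|y s]] b //= fp [_ xb yb [c s_c [cy bc]]].
have xy := forward_path_adj fp.
move: s_c; rewrite !inE => /orP[/eqP c_x|/orP[/eqP c_y|s_c]].
- by move: cy; rewrite c_x (adj_same_part xy).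
- by move: (vlt_vval yb) (vle_vval bc); rewrite c_y; lia.
- have := forward_path_lt_height fp s_c cy.
  by have := height_le_nbr xy xb yb; have := vle_vval bc; lia.
Qed.

End HeightCriterion.

Fixpoint block_edge (k u v : nat) : bool :=
  if k is k'.+1 then
    let m := 2 ^ k' in
    if u < m then (if v < m then u == v else block_edge k' u (v - m))
    else (v < m) && block_edge k' (u - m) v
  else (u == 0) && (v == 0).

(* A strict upper bound for the V-vertices of the forward paths of [block_edge k] that start
   with the edge (u, v), in the sense of the height criterion above. *)
Fixpoint block_height (k u v : nat) : nat :=
  if k is k'.+1 then
    let m := 2 ^ k' in
    if u < m then (if v < m then m else m + block_height k' u (v - m))
    else block_height k' (u - m) v
  else v.+1.

Lemma block_edgeC k u v : block_edge k u v = block_edge k v u.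
Proof.
elim: k u v => [|k IH] u v /=; first by rewrite andbC.
by case: (ltnP u (2 ^ k)) => hu; case: (ltnP v (2 ^ k)) => hv //=; rewrite ?IH // eq_sym.
Qed.

Lemma block_edge_lt k u v : block_edge k u v -> v < 2 ^ k.
Proof.
elim: k u v => [|k IH] u v /=; first by case/andP => _ /eqP ->.
rewrite expnS; case: (ltnP u (2 ^ k)) => hu; case: (ltnP v (2 ^ k)) => hv //=.
all: by try move=> /IH; lia.
Qed.

Lemma block_height_le k u v : block_edge k u v -> block_height k u v <= 2 ^ k.
Proof.
elim: k u v => [|k IH] u v /=; first by case/andP => _ /eqP ->.
rewrite expnS; case: (ltnP u (2 ^ k)) => hu; case: (ltnP v (2 ^ k)) => hv //=.
all: by try move=> /IH; lia.
Qed.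

Lemma block_height_gt k u v : block_edge k u v -> v < block_height k u v.
Proof.
elim: k u v => [//|k IH] u v /=.
case: (ltnP u (2 ^ k)) => hu; case: (ltnP v (2 ^ k)) => hv //=.
all: by try move=> /IH; lia.
Qed.

Lemma block_height_le_nbr k u v x :
  block_edge k u v -> block_edge k u x -> v < x -> block_height k u v <= x.
Proof.
elim: k u v x => [|k IH] u v x /=.
  by case/andP=> _ /eqP -> /andP[_ /eqP ->].
case: (ltnP u (2 ^ k)) => hu; case: (ltnP v (2 ^ k)) => hv;
  case: (ltnP x (2 ^ k)) => hx //=.
all: move=> e1 e2 lt.
all: first [exact: IH e1 e2 lt | have := IH _ _ (x - 2 ^ k) e1 e2; lia | lia].
Qed.

Lemma block_height_antimono k u v u' v' :
  block_edge k u v -> block_edge k u' v -> block_edge k u' v' -> u < u' -> v < v' ->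
  block_height k u' v' <= block_height k u v.
Proof.
elim: k u v u' v' => [|k IH] u v u' v' /=.
  by case/andP=> /eqP -> /eqP -> /andP[/eqP -> _].
case: (ltnP u (2 ^ k)) => hu; case: (ltnP v (2 ^ k)) => hv;
  case: (ltnP u' (2 ^ k)) => hu'; case: (ltnP v' (2 ^ k)) => hv' //=.
all: move=> e1 e2 e3 lt_u lt_v.
all: first [lia | have := block_height_le e3; lia | have := IH _ _ _ _ e1 e2 e3; lia].
Qed.

Definition block_count k := \sum_(0 <= u < 2 ^ k) \sum_(0 <= v < 2 ^ k) block_edge k u v.

Lemma sum_pow2S m (F : nat -> nat) : \sum_(0 <= i < 2 ^ m.+1) F i =
  \sum_(0 <= i < 2 ^ m) F i + \sum_(0 <= i < 2 ^ m) F (i + 2 ^ m).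
Proof.
rewrite (@big_cat_nat _ _ _ (2 ^ m) 0 (2 ^ m.+1)) ?leq_pexp2l //; congr (_ + _).
by rewrite -[in LHS](add0n (2 ^ m)) big_addn expnS mul2n -addnn addnK.
Qed.

Lemma sum_nat_widen0 m n (F : nat -> nat) : m <= n -> (forall i, m <= i -> F i = 0) ->
  \sum_(0 <= i < n) F i = \sum_(0 <= i < m) F i.
Proof.
move=> le_mn F0; rewrite (big_cat_nat (leq0n m) le_mn) /= [X in _ + X]big1_seq ?addn0 //.
by move=> i /andP[_]; rewrite mem_index_iota => /andP[/F0].
Qed.

Lemma block_countS k : block_count k.+1 = (block_count k).*2 + 2 ^ k.
Proof.
have ltF v : (v + 2 ^ k < 2 ^ k) = false by rewrite ltnNge leq_addl.
have low : {in index_iota 0 (2 ^ k), forall u, \sum_(0 <= v < 2 ^ k.+1) block_edge k.+1 u v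
                                             = 1 + \sum_(0 <= v < 2 ^ k) block_edge k u v}.
  move=> u; rewrite mem_index_iota => /andP[_ hu]; rewrite sum_pow2S /= hu; congr (_ + _).
  - rewrite (eq_big_nat _ _ (F2 := fun v => (u == v : nat))) => [|v /andP[_ ->] //].
    rewrite (bigD1_seq u) ?mem_index_iota ?iota_uniq //= eqxx big1 // => v.
    by rewrite eq_sym => /negbTE ->.
  - by apply: eq_big_nat => v _; rewrite ltF addnK.
have high : {in index_iota 0 (2 ^ k), forall u,
    \sum_(0 <= v < 2 ^ k.+1) block_edge k.+1 (u + 2 ^ k) v
    = \sum_(0 <= v < 2 ^ k) block_edge k u v}.
  move=> u _; rewrite sum_pow2S /= ltF addnK [X in _ + X]big1 ?addn0.
  - by apply: eq_big_nat => v /andP[_ ->].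
  - by move=> v _; rewrite ltF.
rewrite /block_count sum_pow2S (eq_big_seq _ low) (eq_big_seq _ high) big_split /=.
by rewrite sum_nat_const_nat subn0 muln1 -addnn; lia.
Qed.

Lemma block_count_closed k : (block_count k).*2 = 2 ^ k * k.+2.
Proof.
elim: k => [|k IH]; first by rewrite /block_count /= !big_nat1.
by rewrite block_countS doubleD IH expnS; lia.
Qed.

Definition block_graph p q k : {set 'I_p * 'I_q} :=
  [set e : 'I_p * 'I_q | block_edge k e.1 e.2].

Lemma adj_block_graph p q k (a b : vert p q) :
  adj (block_graph p q k) a b = ~~ same_part a b && block_edge k (vval a) (vval b).
Proof. by case: a b => a [] b; rewrite /adj ?inE // block_edgeC. Qed.

Lemma PRBG_block_graph p q k : PRBG (block_graph p q k).
Proof.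
apply: (@PRBG_of_height _ _ _ (fun a b => block_height k (vval a) (vval b))).
- by move=> a b; rewrite adj_block_graph => /andP[_]; exact: block_height_gt.
- move=> a b c d; rewrite !adj_block_graph => /andP[_ ab] /andP[_ cb] /andP[_ cd] ac bd.
  exact: block_height_antimono ab cb cd (vlt_vval ac) (vlt_vval bd).
- move=> a b x; rewrite !adj_block_graph => /andP[_ ab] /andP[_ ax] bx.
  exact: block_height_le_nbr ab ax (vlt_vval bx).
Qed.

Lemma card_block_graph p q k :
  2 ^ k <= p -> 2 ^ k <= q -> #|block_graph p q k| = block_count k.
Proof.
move=> le_p le_q; rewrite -sum1_card big_mkcond /=.
rewrite (eq_bigr (fun e : 'I_p * 'I_q => block_edge k e.1 e.2 : nat)) => [|e _]; last first.
  by rewrite inE; case: block_edge.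
rewrite -(pair_bigA _ (fun (u : 'I_p) (v : 'I_q) => block_edge k u v : nat)) /=.
rewrite -(big_mkord xpredT (fun u => \sum_(v < q) block_edge k u v)).
rewrite (sum_nat_widen0 le_p) => [|u le_u]; last first.
  rewrite big1 // => v _; case e: block_edge => //.
  by move: (leq_ltn_trans le_u (block_edge_lt (etrans (block_edgeC _ _ _) e))); rewrite ltnn.
apply: eq_big_nat => u _.
rewrite -(big_mkord xpredT (fun v => block_edge k u v : nat)) (sum_nat_widen0 le_q) // => v le_v.
by case e: block_edge => //; move: (leq_ltn_trans le_v (block_edge_lt e)); rewrite ltnn.
Qed.

Lemma ln_le x y : (0 < x -> x <= y -> ln x <= ln y)%R.
Proof.
move=> x_gt0 /Rle_lt_or_eq_dec[/(ln_increasing _ _ x_gt0)/Rlt_le // | ->].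
exact: Rle_refl.
Qed.

Lemma ln2_lt1 : (ln 2 < 1)%R.
Proof.
rewrite -[X in (_ < X)%R]ln_exp; apply: ln_increasing; first lra.
by have := exp_ineq1 1 R1_neq_R0; lra.
Qed.

Lemma INR_expn m k : INR (m ^ k) = (INR m ^ k)%R.
Proof. by elim: k => [//|k IH]; rewrite expnS mult_INR IH. Qed.

Lemma INR_le_log2 (m n : nat) : 0 < n -> 2 ^ m <= (2 * n) ^ n ->
  (INR m <= INR n * log2 (INR n) + INR n)%R.
Proof.
move=> n_gt0 /leP/le_INR; rewrite !INR_expn mult_INR (_ : INR 2 = 2%R) => [le_pow|].
  2: by simpl; lra.
have n_pos : (0 < INR n)%R by apply: lt_0_INR; apply/ltP.
have ln2_pos : (0 < ln 2)%R by have := ln_lt_2; lra.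
have := ln_le (pow_lt _ m Rlt_0_2) le_pow.
rewrite !ln_pow ?ln_mult; try lra.
move=> le_ln; rewrite /log2; apply: (Rmult_le_reg_r (ln 2)) => //.
have -> : ((INR n * (ln (INR n) / ln 2) + INR n) * ln 2 = INR n * (ln 2 + ln (INR n)))%R.
  by field; lra.
lra.
Qed.

Lemma nlnn_le_pow2 (n k : nat) : 0 < n -> n <= 2 ^ k ->
  (INR n * ln (INR n) <= INR (2 ^ k * k))%R.
Proof.
move=> n_gt0 /leP/le_INR; rewrite mult_INR INR_expn (_ : INR 2 = 2%R) => [le_n|].
  2: by simpl; lra.
have n_ge1 : (1 <= INR n)%R by apply: (le_INR 1); apply/leP.
have ln_ge0 : (0 <= ln (INR n))%R by rewrite -ln_1; apply: ln_le; lra.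
have ln_le_k : (ln (INR n) <= INR k)%R.
  apply: Rle_trans (ln_le _ le_n) _; first lra.
  rewrite ln_pow; last lra.
  by have := ln2_lt1; have := pos_INR k; nra.
by apply: Rmult_le_compat => //; lra.
Qed.

Theorem theorem4p2 :
  (exists C : R, forall (p q : nat) (E : {set 'I_p * 'I_q}),
      PRBG E -> (2 <= p + q)%N ->
      (INR #|E| <= INR (p + q) * log2 (INR (p + q)) + C * INR (p + q))%R)
  /\
  (exists c : R, (0 < c)%R /\
     forall n : nat, (2 <= n)%N ->
       exists (p q : nat) (E : {set 'I_p * 'I_q}),
         p + q = n /\ PRBG E /\ (c * INR n * ln (INR n) <= INR #|E|)%R).
Proof.
split.
- exists 1%R => p q E PRBG_E n_ge2; rewrite Rmult_1_l.
  by apply: INR_le_log2; [lia | exact: PRBG_card_le].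
- exists (/ 8)%R; split; first lra.
  move=> n n_ge2; set k := trunc_log 2 n./2.
  have /andP[lo hi] : 2 ^ k.+1 <= n < 2 ^ k.+2.
    by rewrite -(trunc_log2S n_ge2); apply: trunc_log_bounds; lia.
  have le_k : 2 ^ k <= n - 2 ^ k by move: lo; rewrite expnS; lia.
  exists (2 ^ k), (n - 2 ^ k), (block_graph (2 ^ k) (n - 2 ^ k) k).
  split; first by move: lo; rewrite expnS; lia.
  split; first exact: PRBG_block_graph.
  rewrite card_block_graph //.
  have count8 : 2 ^ k.+2 * k.+2 = 8 * block_count k.
    by have := block_count_closed k; rewrite !expnS; lia.
  have := nlnn_le_pow2 (k := k.+2) (ltnW n_ge2) (ltnW hi).
  by rewrite count8 mult_INR (_ : INR 8 = 8%R); [lra | simpl; lra].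
Qed.
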